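(* Let $G$ be a finite simple cubic graph with a 3-decomposition $(T,C,M)$, and colour exactly the edges of $T$ green and all other edges black. If $T$ is a homeomorphically irreducible spanning tree (HIST), then $M=\emptyset$. Otherwise there is a finite simple cubic graph $G'$ with fewer vertices than $G$ and a 3-decomposition $(T',C,M')$ of $G'$ (with the same 2-regular part $C$) such that, if exactly the edges of $T'$ are coloured green, then $G$ together with its green/black colouring is obtained from $G'$ together with its colouring by a single Tutte-extension or a single diamond-extension. In particular, every 3-decomposition can be reduced to a 3-decomposition whose spanning tree is a HIST by a finite sequence of Tutte- and diamond-reductions.
   Context: All graphs are finite and simple. A graph is cubic if every vertex has degree 3. A 3-decomposition $(T,C,M)$ of a graph $G$ is a partition of $E(G)$ into the edge sets of a spanning tree $T$, a (possibly empty) 2-regular subgraph $C$ (a vertex-disjoint union of cycles), and a (possibly empty) matching $M$. A HIST (homeomorphically irreducible spanning tree) is a spanning tree without vertices of degree 2. The operations act on graphs whose edges are coloured green or black. Tutte-extension: choose two distinct green edges $x_uy_u$ and $x_vy_v$ (they may share an end); subdivide the first by a new vertex $u$ and the second by a new vertex $v$, the four resulting edges $x_uu,uy_u,x_vv,vy_v$ being green, and add a new black edge $uv$. Diamond-extension: choose a green edge $xy$, delete it, add new vertices $d_1,d_2,d_3,d_4$ with green edges $xd_1, d_1d_3, d_3d_2, d_2d_4, d_4y$ and black edges $d_1d_2, d_3d_4$ (so $d_1,d_2,d_3,d_4$ span a diamond, i.e. $K_4$ minus the edge $d_1d_4$). Tutte-reduction and diamond-reduction are the inverse operations. *)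

(* Graphs on a finite vertex type V: a graph is a vertex set
   S : {set V} with an edge set E : {set {set V}} of 2-element subsets of S
   (hence finite and simple). *)
From Stdlib Require Import Relation_Operators.
From mathcomp Require Import all_boot.
Set Implicit Arguments. Unset Strict Implicit. Unset Printing Implicit Defensive.

Section Defs.
Variable V : finType.
Implicit Types (S : {set V}) (E F T C M : {set {set V}}).

Definition is_graph S E : Prop := forall e, e \in E -> #|e| = 2 /\ e \subset S.

Definition deg F (x : V) : nat := #|[set e in F | x \in e]|.

Definition cubic S E : Prop := forall x, x \in S -> deg E x = 3.

Definition adj F : rel V := fun a b => [set a; b] \in F.

Definition connected_on S F : Prop :=
  forall x y, x \in S -> y \in S -> connect (adj F) x y.

Definition has_cycle F : Prop :=
  exists s : seq V, [/\ uniq s, 3 <= size s & cycle (adj F) s].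

Definition spanning_tree S E T : Prop :=
  T \subset E /\ connected_on S T /\ ~ has_cycle T.

Definition two_regular_sub E C : Prop :=
  C \subset E /\ forall x, deg C x = 0 \/ deg C x = 2.

Definition matching E M : Prop := M \subset E /\ forall x, deg M x <= 1.

Definition decomp3 S E T C M : Prop :=
  [/\ spanning_tree S E T, two_regular_sub E C, matching E M,
      T :&: C = set0 /\ T :&: M = set0 /\ C :&: M = set0
    & T :|: C :|: M = E].

Definition HIST S E T : Prop :=
  spanning_tree S E T /\ forall x, x \in S -> deg T x != 2.

(* (S,E) with green edges T is obtained from (S',E') with green edges T'
   by a Tutte-extension; black edges are the non-green ones. *)
Definition tutte_ext S' E' T' S E T : Prop :=
  exists xu yu xv yv u v : V,
    [set xu; yu] \in T' /\ [set xv; yv] \in T' /\ [set xu; yu] != [set xv; yv] /\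
    u \notin S' /\ v \notin S' /\ u != v /\
    S = S' :|: [set u; v] /\
    T = (T' :\: [set [set xu; yu]; [set xv; yv]])
          :|: [set [set xu; u]; [set u; yu]; [set xv; v]; [set v; yv]] /\
    E = (E' :\: [set [set xu; yu]; [set xv; yv]])
          :|: [set [set xu; u]; [set u; yu]; [set xv; v]; [set v; yv]; [set u; v]].

Definition diamond_ext S' E' T' S E T : Prop :=
  exists x y d1 d2 d3 d4 : V,
    [set x; y] \in T' /\ uniq [:: d1; d2; d3; d4] /\
    d1 \notin S' /\ d2 \notin S' /\ d3 \notin S' /\ d4 \notin S' /\
    S = S' :|: [set d1; d2; d3; d4] /\
    T = (T' :\ [set x; y])
          :|: [set [set x; d1]; [set d1; d3]; [set d3; d2]; [set d2; d4]; [set d4; y]] /\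
    E = (E' :\ [set x; y])
          :|: [set [set x; d1]; [set d1; d3]; [set d3; d2]; [set d2; d4]; [set d4; y];
                   [set d1; d2]; [set d3; d4]].

(* One reduction step (inverse of an extension) keeping the 2-regular part C:
   from a 3-decomposition (T,C,M) of (S,E) to a 3-decomposition (T',C,M') of a
   finite simple cubic graph (S',E'). *)
Definition red_step (C : {set {set V}})
  (a b : {set V} * {set {set V}} * {set {set V}} * {set {set V}}) : Prop :=
  let: (Sa, Ea, Ta, Ma) := a in
  let: (Sb, Eb, Tb, Mb) := b in
  [/\ is_graph Sb Eb, cubic Sb Eb, decomp3 Sb Eb Tb C Mb
    & tutte_ext Sb Eb Tb Sa Ea Ta \/ diamond_ext Sb Eb Tb Sa Ea Ta].

End Defs.

From Stdlib Require Import Relation_Operators.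
From mathcomp Require Import all_boot zify.
Set Implicit Arguments. Unset Strict Implicit. Unset Printing Implicit Defensive.

(* Since deg_T + deg_C + deg_M = 3 at every vertex, with deg_C in {0, 2} and deg_T >= 1, the
   vertices of T-degree 2 are exactly the ends of matching edges. So M is empty when T is a HIST,
   and otherwise some matching edge uv has two green edges at each end. Deleting uv and
   suppressing u and v undoes a Tutte-extension, unless the two green neighbours of u (say) are
   already adjacent. The third side ab of that triangle must be a matching edge, and a
   Tutte-reduction at ab works unless a or b is a green neighbour of v; then u, v, a, b span a
   diamond. The diamond can be reduced unless its two outer neighbours are adjacent, and the edge
   joining them is then a matching edge admitting a Tutte-reduction. Every reduction removes
   vertices, so iterating ends at a HIST. *)

Lemma setI0_memF (T : finType) (A B : {set T}) (t : T) :
  A :&: B = set0 -> (t \in A) && (t \in B) = false.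
Proof. by move=> AB; rewrite -in_setI AB inE. Qed.

Lemma eq_falseLR (T : eqType) (x y : T) : x != y -> ((x == y) = false) * ((y == x) = false).
Proof. by move=> xy; rewrite (eq_sym y) (negbTE xy). Qed.

Ltac finset_by_cases facts :=
  let t := fresh "t" in
  apply/setP => t; rewrite !inE;
  repeat match goal with |- context [@eq_op _ t ?X] => case: (eqVneq t X) => [->|_] end;
  rewrite ?facts /= ?andbT ?andbF ?orbT ?orbF.

Section Edges.
Variable V : finType.
Implicit Types (a b c d p q x y z : V) (e : {set V}) (F : {set {set V}}).

Lemma eq_set2 a b c d : [set a; b] = [set c; d] -> (a = c /\ b = d) \/ (a = d /\ b = c).
Proof.
move=> eq_ab.
have /set2P a_cd : a \in [set c; d] by rewrite -eq_ab set21.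
have /set2P b_cd : b \in [set c; d] by rewrite -eq_ab set22.
have /set2P c_ab : c \in [set a; b] by rewrite eq_ab set21.
have /set2P d_ab : d \in [set a; b] by rewrite eq_ab set22.
by case: a_cd b_cd c_ab d_ab => ? [] ? [] ? [] ?; subst; auto.
Qed.

Lemma eq_set2E a b c d :
  ([set a; b] == [set c; d]) = (a == c) && (b == d) || (a == d) && (b == c).
Proof.
apply/eqP/idP => [/eq_set2 [[-> ->]|[-> ->]]|]; rewrite ?eqxx ?orbT //.
by case/orP => /andP [/eqP -> /eqP ->] //; rewrite setUC.
Qed.

Lemma set2_inj a b c : [set a; b] = [set a; c] -> b = c.
Proof. by case/eq_set2 => [[_ //]|[<- ->]]. Qed.

Lemma card2_set2 e x : #|e| = 2 -> x \in e -> exists2 y, y != x & e = [set x; y].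
Proof.
move/eqP/cards2P => [a [b [ab ->]]] /set2P [] ->; first by exists b; rewrite 1?eq_sym.
by exists a; rewrite // setUC.
Qed.

Lemma adj_sym F : symmetric (adj F).
Proof. by move=> a b; rewrite /adj setUC. Qed.

Lemma connect_adj_sym F : connect_sym (adj F).
Proof. exact/sym_connect_sym/adj_sym. Qed.

Lemma is_graph_sub S F F' : F' \subset F -> is_graph S F -> is_graph S F'.
Proof. by move=> /subsetP sub gF e /sub /gF. Qed.

Lemma adj_neq S F p q : is_graph S F -> adj F p q -> p != q.
Proof. by move=> gF /gF [card_pq _]; move: card_pq; rewrite cards2; case: (p != q). Qed.

Lemma adj_setD1 F f p q : adj F p q -> [set p; q] != f -> adj (F :\ f) p q.
Proof. by rewrite /adj !inE => -> ->. Qed.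

Lemma adj_mem S F p q : is_graph S F -> adj F p q -> p \in S.
Proof. by move=> gF /gF [_ /subsetP]; apply; rewrite set21. Qed.

End Edges.

Section Degree.
Variable V : finType.
Implicit Types (p q x z : V) (e : {set V}) (F : {set {set V}}).

Lemma deg_setUI F1 F2 x : deg (F1 :|: F2) x + deg (F1 :&: F2) x = deg F1 x + deg F2 x.
Proof.
rewrite /deg -[RHS]cardsUI; congr (_ + _); apply: eq_card => e; rewrite !inE.
all: by case: (e \in F1); case: (e \in F2); case: (x \in e).
Qed.

Lemma deg_set0 x : deg set0 x = 0.
Proof. by apply/eqP; rewrite cards_eq0 -subset0; apply/subsetP => e; rewrite !inE. Qed.

Lemma deg_set1 e x : deg [set e] x = (x \in e).
Proof.
rewrite /deg (_ : [set f in [set e] | x \in f] = if x \in e then [set e] else set0).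
  by case: ifP; rewrite ?cards1 ?cards0.
by apply/setP => f; rewrite !inE; case: ifP => xe; rewrite ?inE; case: eqP => // ->.
Qed.

Lemma deg_setD1 F e x : e \in F -> deg F x = deg (F :\ e) x + (x \in e).
Proof.
move=> eF; rewrite -deg_set1 -deg_setUI setUC setD1K //.
rewrite (_ : _ :&: _ = set0) ?deg_set0 ?addn0 //.
by apply/disjoint_setI0; rewrite disjoint_sym disjoints1 !inE eqxx.
Qed.

Lemma deg_setU1 F e x : e \notin F -> deg (e |: F) x = deg F x + (x \in e).
Proof.
move=> eF; rewrite -deg_set1 addnC -deg_setUI.
by rewrite (_ : _ :&: _ = set0) ?deg_set0 ?addn0 //; apply/disjoint_setI0; rewrite disjoints1.
Qed.

Lemma deg_subset F1 F2 x : F1 \subset F2 -> deg F1 x <= deg F2 x.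
Proof.
move=> /subsetP sub; apply/subset_leq_card/subsetP => e.
by rewrite !inE => /andP [/sub -> ->].
Qed.

Lemma deg_gt0 F p q : adj F p q -> 0 < deg F p.
Proof. by move=> pq; apply/card_gt0P; exists [set p; q]; rewrite inE set21 andbT. Qed.

Lemma deg_partition F1 F2 F3 x :
  F1 :&: F2 = set0 -> F1 :&: F3 = set0 -> F2 :&: F3 = set0 ->
  deg (F1 :|: F2 :|: F3) x = deg F1 x + deg F2 x + deg F3 x.
Proof.
move=> F12 F13 F23.
have := deg_setUI (F1 :|: F2) F3 x; rewrite setIUl F13 F23 setU0 deg_set0 addn0 => ->.
by have := deg_setUI F1 F2 x; rewrite F12 deg_set0 addn0 => ->.
Qed.

(* The edges [p; q], q in A, are distinct, so there are #|A| of them at p. *)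
Lemma deg_nbrs F p (A : {set V}) z :
  {in A, forall q, adj F p q} -> deg F p = #|A| -> adj F p z -> z \in A.
Proof.
move=> adjA cardA pz.
pose B := [set [set p; q] | q in A].
have cardB : #|B| = deg F p by rewrite cardA card_imset // => q q' /set2_inj.
have /(subset_cardP cardB) eqB : B \subset [set e in F | p \in e].
  by apply/subsetP => _ /imsetP [q qA ->]; rewrite inE set21 andbT; apply: adjA.
have /imsetP [q qA /set2_inj -> //] : [set p; z] \in B by rewrite eqB inE set21 andbT.
Qed.

Lemma deg1_nbr F p q z : deg F p = 1 -> adj F p q -> adj F p z -> z = q.
Proof.
move=> dp pq pz; apply/set1P; apply: (deg_nbrs _ _ pz); last by rewrite cards1.
by move=> ? /set1P ->.
Qed.

Lemma deg2_nbrs F p q r z : deg F p = 2 -> q != r -> adj F p q -> adj F p r ->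
  adj F p z -> z = q \/ z = r.
Proof.
move=> dp qr pq pr pz; apply/set2P; apply: (deg_nbrs _ _ pz); last by rewrite cards2 qr.
by move=> ? /set2P [] ->.
Qed.

Lemma deg3_nbrs F p q1 q2 q3 z : deg F p = 3 ->
  q1 != q2 -> q1 != q3 -> q2 != q3 -> adj F p q1 -> adj F p q2 -> adj F p q3 ->
  adj F p z -> [\/ z = q1, z = q2 | z = q3].
Proof.
move=> dp n12 n13 n23 p1 p2 p3 pz.
have : z \in [set q1; q2; q3].
  apply: (deg_nbrs _ _ pz); first by move=> ? /setUP [/set2P []|/set1P] ->.
  by rewrite -setUA cardsU1 cards2 n23 !inE negb_or n12 n13.
by case/setUP => [/set2P []|/set1P] ->; constructor.
Qed.

Lemma deg_gt0_adj S F p : is_graph S F -> 0 < deg F p -> exists q, adj F p q.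
Proof.
move=> gF /card_gt0P [e]; rewrite inE => /andP [eF pe].
have [q _ def_e] := card2_set2 (proj1 (gF e eF)) pe.
by exists q; rewrite /adj -def_e.
Qed.

Lemma deg2_adj S F p : is_graph S F -> deg F p = 2 ->
  exists q r, [/\ q != r, adj F p q, adj F p r & forall z, adj F p z -> z = q \/ z = r].
Proof.
move=> gF dp; move/eqP/cards2P: (dp) => [e1 [e2 [e12 def_edges]]].
have /[!inE] /andP [e1F pe1] : e1 \in [set e in F | p \in e] by rewrite def_edges set21.
have /[!inE] /andP [e2F pe2] : e2 \in [set e in F | p \in e] by rewrite def_edges set22.
have [q _ def_e1] := card2_set2 (proj1 (gF e1 e1F)) pe1.
have [r _ def_e2] := card2_set2 (proj1 (gF e2 e2F)) pe2.
have qr : q != r by apply: contraNneq e12 => qr; rewrite def_e1 def_e2 qr.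
have Fpq : adj F p q by rewrite /adj -def_e1.
have Fpr : adj F p r by rewrite /adj -def_e2.
by exists q, r; split=> // z; apply: deg2_nbrs.
Qed.

Lemma deg2_other_adj S F p q : is_graph S F -> deg F p = 2 -> adj F p q ->
  exists r, [/\ r != q, adj F p r & forall z, adj F p z -> z = q \/ z = r].
Proof.
move=> gF dp Fpq; have [r1 [r2 [r12 Fpr1 Fpr2 nbr_p]]] := deg2_adj gF dp.
case: (nbr_p q Fpq) => ->; first by exists r2; split; rewrite 1?eq_sym.
by exists r1; split=> // z /nbr_p []; auto.
Qed.
End Degree.

Section Trees.
Variable V : finType.
Implicit Types (S : {set V}) (a b p q w x y z : V) (F T : {set {set V}}).

Lemma connect_homo (e e' : rel V) (f : V -> V) x y :
  (forall p q, e p q -> connect e' (f p) (f q)) -> connect e x y -> connect e' (f x) (f y).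
Proof.
move=> homo_f /connectP [s + ->]; elim: s x => [|z s IHs] x //= /andP [xz zs].
exact: connect_trans (homo_f _ _ xz) (IHs _ zs).
Qed.

Lemma connected_closed S T (K : {set V}) x :
  connected_on S T -> x \in S -> x \in K -> (forall p q, p \in K -> adj T p q -> q \in K) ->
  {subset S <= K}.
Proof.
move=> conT xS xK closedK y yS.
have /closed_connect closed_conn : closed (adj T) K.
  by apply: intro_closed => [|p q /closedK pq /pq //]; apply: connect_adj_sym.
by rewrite -(closed_conn _ _ (conT _ _ xS yS)).
Qed.

Lemma has_cycle_of_connect T p q : p != q -> adj T p q ->
  connect (adj (T :\ [set p; q])) p q -> has_cycle T.
Proof.
move=> pq pqT /connectP [s s_path s_last].
case: (shortenP s_path) s_last => s' s'_path s'_uniq _ s'_last.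
exists (p :: s'); split=> //.
  case: s' s'_path s'_uniq s'_last => [|z [|z' s'']] //=.
    by move=> _ _ qp; rewrite qp eqxx in pq.
  by move=> /andP [pz _] _ zq; move: pz; rewrite -zq /adj !inE eqxx.
rewrite /= rcons_path -s'_last adj_sym andbC; apply/andP; split=> //.
by apply: sub_path s'_path => y z; rewrite /adj in_setD1 => /andP [].
Qed.

Lemma connect_of_has_cycle T : has_cycle T ->
  exists p q, [/\ p != q, adj T p q & connect (adj (T :\ [set p; q])) p q].
Proof.
move=> [[|x0 [|x1 [|y s]]] [s_uniq s_size s_cycle]] //.
move: s_cycle s_uniq; rewrite /= rcons_path => /and3P [a01 a1y /andP [s_path s_last]].
rewrite !inE !negb_or => /and4P [/and3P [n01 n0y n0s] /andP [n1y n1s] _ _].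
exists x1, x0; split; rewrite 1?eq_sym 1?adj_sym //.
have avoid_x1 a b : a != x1 -> adj T a b -> b != x1 -> adj (T :\ [set x1; x0]) a b.
  move=> ax1 ab bx1; apply: adj_setD1 => //.
  apply/eqP => /eq_set2 [[ax1' _]|[_ bx1']].
    by rewrite ax1' eqxx in ax1.
  by rewrite bx1' eqxx in bx1.
apply/connectP; exists (y :: rcons s x0); last by rewrite /= last_rcons.
rewrite /= adj_setD1 //=; last by apply: contraNneq n0y => /set2_inj ->.
apply: (@sub_in_path _ (predC1 x1) (adj T)) => [a b /[!inE] ax1 bx1 ab||].
- exact: avoid_x1.
- rewrite /= all_rcons eq_sym n1y /= n01 /=.
  by apply/allP => z zs /=; apply: contraNneq n1s => <-.
- by rewrite rcons_path s_path.
Qed.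
End Trees.

Section Suppression.
Variable V : finType.
Implicit Types (S : {set V}) (a b p q w x y z : V) (e : {set V}) (F E T C M R A : {set {set V}}).

Definition suppress F a w b := (F :\: [set [set a; w]; [set w; b]]) :|: [set [set a; b]].

Lemma adj_suppress_avoid F a w b p q : adj F p q -> p != w -> q != w ->
  adj (suppress F a w b) p q.
Proof.
move=> Fpq pw qw; have w_pq : w \notin [set p; q] by rewrite !inE negb_or !(eq_sym w) pw qw.
move: Fpq; rewrite /adj !inE negb_or => ->; rewrite andbT; apply/orP; left.
by apply/andP; split; apply: contraNneq w_pq => ->; rewrite !inE eqxx ?orbT.
Qed.

Lemma connected_on_suppress S T a w b : (forall z, adj T w z -> z = a \/ z = b) ->
  connected_on S T -> connected_on (S :\ w) (suppress T a w b).
Proof.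
move=> nbr_w conT x y /setD1P [xw xS] /setD1P [yw yS].
(* Collapsing w onto a maps every walk of T to a walk of the suppressed tree. *)
pose f p := if p == w then a else p.
have fa : f a = a by rewrite /f; case: eqP.
have ab : connect (adj (suppress T a w b)) a (f b).
  by rewrite /f; case: eqP => // _; apply: connect1; rewrite /adj !inE eqxx orbT.
have <- : f x = x by rewrite /f (negbTE xw).
have <- : f y = y by rewrite /f (negbTE yw).
apply: connect_homo (conT _ _ xS yS) => p q pq.
have fw : f w = a by rewrite /f eqxx.
case: (eqVneq p w) => [pw|pw].
  by subst p; rewrite fw; case: (nbr_w q pq) => ->; rewrite ?fa ?connect0.
case: (eqVneq q w) => [qw|qw].
  subst q; rewrite fw connect_adj_sym; rewrite adj_sym in pq.
  by case: (nbr_w p pq) => ->; rewrite ?fa ?connect0.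
by rewrite /f (negbTE pw) (negbTE qw); apply/connect1/adj_suppress_avoid.
Qed.

Lemma adj_suppress T a w b y z : adj (suppress T a w b) y z ->
  [set y; z] = [set a; b] \/ [/\ adj T y z, [set y; z] != [set a; w] & [set y; z] != [set w; b]].
Proof.
rewrite /adj !inE negb_or => /orP [/andP [/andP [? ?] ?]|/eqP ->]; last by left.
by right; split.
Qed.

Lemma acyclic_suppress T a w b : a != b -> a != w -> adj T a w -> adj T w b ->
  ~ has_cycle T -> ~ has_cycle (suppress T a w b).
Proof.
move=> ab aw Taw Twb acT /connect_of_has_cycle [p [q [pq T'pq conn]]]; apply: acT.
have via_w F : adj F a w -> adj F w b -> connect (adj F) a b /\ connect (adj F) b a.
  move=> Faw Fwb; have conn_ab := connect_trans (connect1 Faw) (connect1 Fwb).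
  by split; last rewrite connect_adj_sym.
case: (adj_suppress T'pq) => [pq_ab|[Tpq pq_aw pq_wb]].
  have conn_ab : connect (adj (T :\ [set a; w])) a b.
    have {}conn : connect (adj (T :\ [set a; w])) p q.
      apply: connect_sub conn => y z; rewrite /adj in_setD1 => /andP [yz_ab].
      case/adj_suppress => [yz_ab'|[Tyz yz_aw _]]; last exact/connect1/adj_setD1.
      by rewrite yz_ab' pq_ab eqxx in yz_ab.
    by case/eq_set2: pq_ab conn => [[-> ->]|[-> ->]]; rewrite // connect_adj_sym.
  apply: (has_cycle_of_connect aw Taw); apply: connect_trans conn_ab (connect1 _).
  rewrite adj_sym; apply: adj_setD1 => //.
  by apply: contraNneq ab => /eq_set2 [[<- ->]|[_ ->]].
apply: (has_cycle_of_connect pq Tpq); apply: connect_sub conn => y z.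
rewrite /adj in_setD1 => /andP [yz_pq].
case/adj_suppress => [yz_ab|[Tyz _ _]]; last exact/connect1/adj_setD1.
rewrite eq_sym in pq_aw; rewrite eq_sym in pq_wb.
have [conn_ab conn_ba] := via_w _ (adj_setD1 Taw pq_aw) (adj_setD1 Twb pq_wb).
by case/eq_set2: yz_ab => [[-> ->]|[-> ->]].
Qed.

Lemma is_graph_suppress S E a w b : is_graph S E -> adj E a w -> adj E w b -> a != b ->
  (forall z, adj E w z -> z = a \/ z = b) -> is_graph (S :\ w) (suppress E a w b).
Proof.
move=> gE Eaw Ewb ab nbr_w e; rewrite !inE negb_or => /orP [/andP [/andP [e_aw e_wb] eE]|/eqP ->].
  have [card_e /subsetP sub_e] := gE e eE; split=> //.
  apply/subsetP => x xe; rewrite !inE sub_e // andbT; apply: contraNneq e_aw => xw.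
  rewrite xw in xe; have [z _ def_e] := card2_set2 card_e xe.
  have [def_z|def_z] : z = a \/ z = b by apply: nbr_w; rewrite /adj -def_e.
    by rewrite def_e def_z setUC.
  by rewrite def_e def_z eqxx in e_wb.
rewrite cards2 ab; split=> //; apply/subsetP => x /set2P [] ->; rewrite !inE.
  by rewrite (adj_neq gE Eaw) (adj_mem gE Eaw).
by rewrite adj_sym in Ewb; rewrite (adj_neq gE Ewb) (adj_mem gE Ewb).
Qed.

Lemma deg_suppress F a w b x : adj F a w -> adj F w b -> [set a; b] \notin F ->
  a != b -> x != w -> deg (suppress F a w b) x = deg F x.
Proof.
move=> Faw Fwb abF ab xw.
have wb_aw : [set w; b] \in F :\ [set a; w].
  by apply: adj_setD1 => //; apply: contraNneq ab => /eq_set2 [[<- ->]|[_ ->]].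
rewrite /suppress setUC deg_setU1; last by rewrite !inE (negbTE abF) andbF.
rewrite (deg_setD1 x Faw) (deg_setD1 x wb_aw) setDDl -addnA; congr (_ + _).
rewrite !inE (negbTE xw) /= orbF.
by case: (eqVneq x a) => [->|xa]; rewrite ?(negbTE ab) ?(negbTE xa) ?addn0.
Qed.

Lemma decomp3_exchange S S' E T C M R A :
  decomp3 S E T C M -> R \subset T -> A :&: E = set0 ->
  connected_on S' ((T :\: R) :|: A) -> ~ has_cycle ((T :\: R) :|: A) ->
  decomp3 S' ((E :\: R) :|: A) ((T :\: R) :|: A) C M.
Proof.
move=> [_ [_ Creg] [_ Mmatch] [TC [TM CM]] defE] RT AE conT' acT'; subst E.
have RT_e e : (e \in R) ==> (e \in T) by apply/implyP/(subsetP RT).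
have cases e : [/\ (e \in T) && (e \in C) = false, (e \in T) && (e \in M) = false,
  (e \in C) && (e \in M) = false, (e \in R) ==> (e \in T)
  & (e \in A) && (e \in T :|: C :|: M) = false].
  by rewrite !setI0_memF // RT_e.
split; [split; [|split] | split | split | split; [|split] | ] => //.
all: try (apply/subsetP => e; move: (cases e); rewrite !inE).
all: try (apply/setP => e; move: (cases e); rewrite !inE).
all: by case: (e \in T); case: (e \in C); case: (e \in M); case: (e \in R); case: (e \in A) => -[].
Qed.

Lemma decomp3_setD1 S E T C M e : decomp3 S E T C M -> e \in M ->
  decomp3 S (E :\ e) T C (M :\ e).
Proof.
move=> [[_ [conT acT]] [_ Creg] [_ Mmatch] [TC [TM CM]] defE] eM; subst E.
have cases f : [/\ (f \in T) && (f \in C) = false, (f \in T) && (f \in M) = false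
  & (f \in C) && (f \in M) = false] by rewrite !setI0_memF.
have Mmatch' x : deg (M :\ e) x <= 1 by apply: leq_trans (Mmatch x); apply/deg_subset/subsetDl.
split; [split; [|split] | split | split | split; [|split] | ] => //.
all: try (apply/subsetP => f; move: (cases f); rewrite !inE).
all: try (apply/setP => f; move: (cases f); rewrite !inE).
all: case: (eqVneq f e) => [->|_]; first by rewrite eM !andbT => -[_ eT eC]; rewrite ?eT ?eC.
all: by case: (f \in T); case: (f \in C); case: (f \in M) => -[].
Qed.

Lemma notin_suppress F a w b e : e \notin F -> e != [set a; b] -> e \notin suppress F a w b.
Proof. by move=> eF e_ab; rewrite !inE (negbTE eF) (negbTE e_ab) andbF. Qed.

Lemma adj_suppress_new F a w b : adj (suppress F a w b) a b.
Proof. by rewrite /adj !inE eqxx orbT. Qed.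

Lemma decomp3_suppress S E T C M a w b : is_graph S E -> decomp3 S E T C M ->
  deg E w = 2 -> a != b -> adj T a w -> adj T w b -> [set a; b] \notin E ->
  [/\ is_graph (S :\ w) (suppress E a w b),
      decomp3 (S :\ w) (suppress E a w b) (suppress T a w b) C M
    & forall z, z != w -> deg (suppress E a w b) z = deg E z].
Proof.
move=> gE D dw ab Taw Twb abE; have [[/subsetP TE [conT acT]] _ _ _ _] := D.
have [Eaw Ewb] : adj E a w /\ adj E w b by split; apply: TE.
have nbr_w z : adj E w z -> z = a \/ z = b by apply: deg2_nbrs; rewrite // adj_sym.
split; [exact: is_graph_suppress | | by move=> z; apply: deg_suppress].
apply: decomp3_exchange D _ _ _ _.
- by apply/subsetP => e /set2P [] ->.
- by apply/disjoint_setI0; rewrite disjoints1.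
- by apply: connected_on_suppress conT => z /TE /nbr_w.
- exact: acyclic_suppress (adj_neq gE Eaw) Taw Twb acT.
Qed.
End Suppression.

Definition reducible (V : finType) (S : {set V}) (E T C : {set {set V}}) : Prop :=
  exists (S' : {set V}) (E' T' M' : {set {set V}}),
    [/\ #|S'| < #|S|, is_graph S' E', cubic S' E', decomp3 S' E' T' C M'
      & tutte_ext S' E' T' S E T \/ diamond_ext S' E' T' S E T].

Section Decomposition.
Variables (V : finType) (S : {set V}) (E T C M : {set {set V}}).
Hypotheses (gE : is_graph S E) (cubE : cubic S E) (D : decomp3 S E T C M).
Implicit Types (p q r x y z : V) (s : seq V).

Lemma T_sub_E : T \subset E. Proof. by case: D => [[]]. Qed.
Lemma C_sub_E : C \subset E. Proof. by case: D => _ []. Qed.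
Lemma M_sub_E : M \subset E. Proof. by case: D => _ _ []. Qed.

Lemma adjTE p q : adj T p q -> adj E p q. Proof. exact: (subsetP T_sub_E). Qed.
Lemma adjCE p q : adj C p q -> adj E p q. Proof. exact: (subsetP C_sub_E). Qed.
Lemma adjME p q : adj M p q -> adj E p q. Proof. exact: (subsetP M_sub_E). Qed.

Lemma tree_is_graph : is_graph S T. Proof. exact: is_graph_sub T_sub_E gE. Qed.

Lemma adjE_cases p q : adj E p q -> [\/ adj T p q, adj C p q | adj M p q].
Proof. by case: D => _ _ _ _ <-; rewrite /adj !inE -orbA => /or3P. Qed.

Lemma adjTM p q : adj T p q -> adj M p q -> False.
Proof.
move=> Tpq Mpq; case: D => _ _ _ [_ [TM _]] _; move: (setI0_memF [set p; q] TM).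
by rewrite /adj in Tpq Mpq; rewrite Tpq Mpq.
Qed.

Lemma adjTC p q : adj T p q -> adj C p q -> False.
Proof.
move=> Tpq Cpq; case: D => _ _ _ [TC _] _; move: (setI0_memF [set p; q] TC).
by rewrite /adj in Tpq Cpq; rewrite Tpq Cpq.
Qed.

Lemma adjE_neq p q : adj E p q -> p != q. Proof. exact: adj_neq gE. Qed.
Lemma adjE_mem p q : adj E p q -> p \in S. Proof. exact: adj_mem gE. Qed.

Lemma tree_connected : connected_on S T. Proof. by case: D => [[_ []]]. Qed.

Lemma tree_acyclic s : uniq s -> 3 <= size s -> cycle (adj T) s -> False.
Proof. by case: D => [[_ [_ acT]]] *; apply: acT; exists s. Qed.

Lemma degTCM p : p \in S -> deg T p + deg C p + deg M p = 3.
Proof.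
by move=> pS; rewrite -(cubE pS); case: D => _ _ _ [TC [TM CM]] <-; rewrite deg_partition.
Qed.

Lemma degT_gt0 p : p \in S -> 0 < deg T p.
Proof.
move=> pS; have [q Epq] : exists q, adj E p q by apply: deg_gt0_adj gE _; rewrite cubE.
have qS : q \in S by rewrite adj_sym in Epq; apply: adjE_mem Epq.
have /connectP [[|z s] /= path_pz last_q] := tree_connected pS qS.
  by move: (adjE_neq Epq); rewrite last_q eqxx.
by case/andP: path_pz => /deg_gt0.
Qed.

Lemma degC_0_2 p : deg C p = 0 \/ deg C p = 2. Proof. by case: D => _ []. Qed.
Lemma degM_le1 p : deg M p <= 1. Proof. by case: D => _ _ []. Qed.

Lemma degM1_of_degT2 p : p \in S -> deg T p = 2 -> deg M p = 1.
Proof. by move=> pS dT; have := degTCM pS; have := degM_le1 p; case: (degC_0_2 p); lia. Qed.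

Lemma matched_degT2 p q : adj M p q -> deg T p = 2.
Proof.
move=> Mpq; have pS := adjE_mem (adjME Mpq).
have := degTCM pS; have := degT_gt0 pS; have := deg_gt0 Mpq; have := degM_le1 p.
by case: (degC_0_2 p); lia.
Qed.

Lemma cycle_degT1 p q : adj C p q -> deg T p = 1.
Proof.
move=> Cpq; have pS := adjE_mem (adjCE Cpq).
have := degTCM pS; have := degT_gt0 pS; have := deg_gt0 Cpq.
by case: (degC_0_2 p); lia.
Qed.

Lemma cubic_no_fourth_nbr p q1 q2 q3 z : adj E p q1 -> adj E p q2 -> adj E p q3 ->
  uniq [:: q1; q2; q3; z] -> ~~ adj E p z.
Proof.
move=> Ep1 Ep2 Ep3; rewrite /= !inE !negb_or => /and4P [/and3P [q12 q13 q1z] /andP [q23 q2z] q3z _].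
apply/negP => /(deg3_nbrs (cubE (adjE_mem Ep1)) q12 q13 q23 Ep1 Ep2 Ep3).
by case=> zq; rewrite zq eqxx ?andbF in q1z q2z q3z.
Qed.

Lemma adjTM_neq p q r : adj T p q -> adj M p r -> q != r.
Proof. by move=> Tpq Mpr; apply/eqP => qr; subst r; apply: adjTM Tpq Mpr. Qed.

Section TutteReduction.
Variables (u v xu yu xv yv : V).
Hypotheses (Muv : adj M u v)
  (Txu : adj T xu u) (Tyu : adj T u yu) (xu_yu : xu != yu)
  (Txv : adj T xv v) (Tyv : adj T v yv) (xv_yv : xv != yv)
  (Exyu : [set xu; yu] \notin E) (Exyv : [set xv; yv] \notin E)
  (xyu_xyv : [set xu; yu] != [set xv; yv]).

Local Notation S' := (S :\ u :\ v).
Local Notation E0 := (E :\ [set u; v]).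
Local Notation E1 := (suppress E0 xu u yu).
Local Notation E' := (suppress E1 xv v yv).
Local Notation T' := (suppress (suppress T xu u yu) xv v yv).

Let u_v : u != v := adjE_neq (adjME Muv).
Let xu_u : xu != u := adjE_neq (adjTE Txu).
Let yu_u : yu != u. Proof. by rewrite eq_sym; apply: adjE_neq (adjTE Tyu). Qed.
Let xv_v : xv != v := adjE_neq (adjTE Txv).
Let yv_v : yv != v. Proof. by rewrite eq_sym; apply: adjE_neq (adjTE Tyv). Qed.
Let xu_v : xu != v. Proof. by apply: adjTM_neq Muv; rewrite adj_sym. Qed.
Let yu_v : yu != v. Proof. exact: adjTM_neq Tyu Muv. Qed.
Let xv_u : xv != u. Proof. by apply: adjTM_neq (_ : adj M v u); rewrite adj_sym. Qed.
Let yv_u : yv != u. Proof. by apply: adjTM_neq Tyv (_ : adj M v u); rewrite adj_sym. Qed.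

Let E0xyu : [set xu; yu] \notin E0.
Proof. by rewrite in_setD1 negb_and Exyu orbT. Qed.
Let E1xyv : [set xv; yv] \notin E1.
Proof.
by rewrite in_setU in_setD in_setD1 (negbTE Exyv) !andbF in_set1 eq_sym (negbTE xyu_xyv).
Qed.

Let uS : u \in S := adjE_mem (adjME Muv).
Let vS : v \in S. Proof. by apply: adjE_mem (adjME (_ : adj M v u)); rewrite adj_sym. Qed.

Let deg_E0 z : z \in [set u; v] -> deg E0 z = 2.
Proof.
move=> zuv; have zS : z \in S by case/set2P: zuv => ->.
by have := cubE zS; rewrite (deg_setD1 z (adjME Muv)) zuv addn1 => -[].
Qed.

Lemma tutte_reduced : [/\ is_graph S' E', decomp3 S' E' T' C (M :\ [set u; v])
  & forall z, z != u -> z != v -> deg E' z = deg E z].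
Proof.
have gE0 : is_graph S E0 := is_graph_sub (subsetDl _ _) gE.
have [gE1 D1 deg1] :=
  decomp3_suppress gE0 (decomp3_setD1 D Muv) (deg_E0 (set21 u v)) xu_yu Txu Tyu E0xyu.
have dv1 : deg E1 v = 2 by rewrite deg1 ?deg_E0 ?set22 // eq_sym.
have T1xv : adj (suppress T xu u yu) xv v.
  by apply: adj_suppress_avoid Txv _ _; rewrite // eq_sym.
have T1yv : adj (suppress T xu u yu) v yv.
  by apply: adj_suppress_avoid Tyv _ _; rewrite // eq_sym.
have [gE' D' deg'] := decomp3_suppress gE1 D1 dv1 xv_yv T1xv T1yv E1xyv.
split=> // z zu zv; rewrite deg' // deg1 // (deg_setD1 z (adjME Muv)).
by rewrite !inE (negbTE zu) (negbTE zv) addn0.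
Qed.

Lemma tutte_ext_reduced : tutte_ext S' E' T' S E T.
Proof.
have TExyu : [set xu; yu] \notin T by apply: contra Exyu; apply: (subsetP T_sub_E).
have TExyv : [set xv; yv] \notin T by apply: contra Exyv; apply: (subsetP T_sub_E).
have Tuv : [set u; v] \notin T by apply/negP => /adjTM; apply.
have facts := (eq_falseLR xyu_xyv, eq_set2E, eq_falseLR u_v, eq_falseLR xu_u, eq_falseLR yu_u,
  eq_falseLR xv_v, eq_falseLR yv_v, eq_falseLR xu_v, eq_falseLR yu_v, eq_falseLR xv_u,
  eq_falseLR yv_u, eq_falseLR xu_yu, eq_falseLR xv_yv, eqxx, andbT, andbF, orbT, orbF).
have mem := (negbTE TExyu, negbTE TExyv, negbTE Tuv, negbTE Exyu, negbTE Exyv, uS, vS,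
  Txu : [set xu; u] \in T, Tyu : [set u; yu] \in T,
  Txv : [set xv; v] \in T, Tyv : [set v; yv] \in T,
  adjTE Txu : [set xu; u] \in E, adjTE Tyu : [set u; yu] \in E, adjTE Txv : [set xv; v] \in E,
  adjTE Tyv : [set v; yv] \in E, adjME Muv : [set u; v] \in E).
exists xu, yu, xv, yv, u, v; repeat split; try by rewrite ?inE ?facts ?mem.
all: by finset_by_cases (facts, mem).
Qed.

Lemma tutte_reduction : reducible S E T C.
Proof.
have [gE' D' deg'] := tutte_reduced.
exists S', E', T', (M :\ [set u; v]); split=> //; last by left; apply: tutte_ext_reduced.
- by rewrite (cardsD1 u S) uS ltnS subset_leq_card // subsetDl.
- by move=> z /[!inE] /and3P [zv zu zS]; rewrite deg' // cubE.
Qed.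
End TutteReduction.

Section DiamondReduction.
Variables (x y d1 d2 d3 d4 : V).
Hypotheses (M12 : adj M d1 d2) (M34 : adj M d3 d4)
  (Tx1 : adj T x d1) (T13 : adj T d1 d3) (T32 : adj T d3 d2) (T24 : adj T d2 d4) (T4y : adj T d4 y)
  (distinct : uniq [:: x; y; d1; d2; d3; d4]) (Exy : [set x; y] \notin E).

Local Notation S' := (S :\ d1 :\ d3 :\ d2 :\ d4).
Local Notation E0 := (E :\ [set d1; d2] :\ [set d3; d4]).
Local Notation E1 := (suppress E0 x d1 d3).
Local Notation E2 := (suppress E1 x d3 d2).
Local Notation E3 := (suppress E2 x d2 d4).
Local Notation E' := (suppress E3 x d4 y).
Local Notation T1 := (suppress T x d1 d3).
Local Notation T2 := (suppress T1 x d3 d2).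
Local Notation T3 := (suppress T2 x d2 d4).
Local Notation T' := (suppress T3 x d4 y).
Local Notation M' := (M :\ [set d1; d2] :\ [set d3; d4]).

Let neqs : [/\ [/\ x != y, x != d1, x != d2, x != d3 & x != d4],
  [/\ y != d1, y != d2, y != d3 & y != d4], [/\ d1 != d2, d1 != d3 & d1 != d4],
  [/\ d2 != d3 & d2 != d4] & d3 != d4].
Proof.
move: distinct; rewrite /= !inE !negb_or.
by case/and5P => /and5P ? /and4P ? /and3P ? /andP ? /andP [? _]; split.
Qed.

Let d_in_S : [/\ d1 \in S, d2 \in S, d3 \in S & d4 \in S].
Proof.
have M21 : adj M d2 d1 by rewrite adj_sym.
have M43 : adj M d4 d3 by rewrite adj_sym.
by split; apply: adjE_mem; apply: adjME; [exact: M12 | exact: M21 | exact: M34 | exact: M43].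
Qed.

Let x_y : x != y. Proof. by case: neqs => [[? ? ? ? ?] [? ? ? ?] [? ? ?] [? ?] ?]. Qed.
Let x_d1 : x != d1. Proof. by case: neqs => [[? ? ? ? ?] [? ? ? ?] [? ? ?] [? ?] ?]. Qed.
Let x_d2 : x != d2. Proof. by case: neqs => [[? ? ? ? ?] [? ? ? ?] [? ? ?] [? ?] ?]. Qed.
Let x_d3 : x != d3. Proof. by case: neqs => [[? ? ? ? ?] [? ? ? ?] [? ? ?] [? ?] ?]. Qed.
Let x_d4 : x != d4. Proof. by case: neqs => [[? ? ? ? ?] [? ? ? ?] [? ? ?] [? ?] ?]. Qed.
Let y_d1 : y != d1. Proof. by case: neqs => [[? ? ? ? ?] [? ? ? ?] [? ? ?] [? ?] ?]. Qed.
Let y_d2 : y != d2. Proof. by case: neqs => [[? ? ? ? ?] [? ? ? ?] [? ? ?] [? ?] ?]. Qed.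
Let y_d3 : y != d3. Proof. by case: neqs => [[? ? ? ? ?] [? ? ? ?] [? ? ?] [? ?] ?]. Qed.
Let y_d4 : y != d4. Proof. by case: neqs => [[? ? ? ? ?] [? ? ? ?] [? ? ?] [? ?] ?]. Qed.
Let d1_d2 : d1 != d2. Proof. by case: neqs => [[? ? ? ? ?] [? ? ? ?] [? ? ?] [? ?] ?]. Qed.
Let d1_d3 : d1 != d3. Proof. by case: neqs => [[? ? ? ? ?] [? ? ? ?] [? ? ?] [? ?] ?]. Qed.
Let d1_d4 : d1 != d4. Proof. by case: neqs => [[? ? ? ? ?] [? ? ? ?] [? ? ?] [? ?] ?]. Qed.
Let d2_d3 : d2 != d3. Proof. by case: neqs => [[? ? ? ? ?] [? ? ? ?] [? ? ?] [? ?] ?]. Qed.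
Let d2_d4 : d2 != d4. Proof. by case: neqs => [[? ? ? ? ?] [? ? ? ?] [? ? ?] [? ?] ?]. Qed.
Let d3_d4 : d3 != d4. Proof. by case: neqs => [[? ? ? ? ?] [? ? ? ?] [? ? ?] [? ?] ?]. Qed.
Let neqF := (eq_falseLR x_y, eq_falseLR x_d1, eq_falseLR x_d2, eq_falseLR x_d3, eq_falseLR x_d4,
  eq_falseLR y_d1, eq_falseLR y_d2, eq_falseLR y_d3, eq_falseLR y_d4, eq_falseLR d1_d2,
  eq_falseLR d1_d3, eq_falseLR d1_d4, eq_falseLR d2_d3, eq_falseLR d2_d4, eq_falseLR d3_d4).

Let not_adj_x_d : [/\ ~~ adj E x d2, ~~ adj E x d3 & ~~ adj E x d4].
Proof.
have E21 : adj E d2 d1 by rewrite adj_sym; apply: adjME.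
have E31 : adj E d3 d1 by rewrite adj_sym; apply: adjTE.
have E23 : adj E d2 d3 by rewrite adj_sym; apply: adjTE.
have E43 : adj E d4 d3 by rewrite adj_sym; apply: adjME.
have E42 : adj E d4 d2 by rewrite adj_sym; apply: adjTE.
rewrite !(adj_sym E x); split.
- by apply: (cubic_no_fourth_nbr E21 E23 (adjTE T24)); rewrite /= !inE ?neqF.
- by apply: (cubic_no_fourth_nbr E31 (adjTE T32) (adjME M34)); rewrite /= !inE ?neqF.
- by apply: (cubic_no_fourth_nbr E43 E42 (adjTE T4y)); rewrite /= !inE ?neqF.
Qed.

Let M34_0 : adj (M :\ [set d1; d2]) d3 d4.
Proof. by apply: adj_setD1 M34 _; rewrite eq_set2E ?neqF. Qed.

Let deg_E_E0 z : deg E z = deg E0 z + (z \in [set d3; d4]) + (z \in [set d1; d2]).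
Proof.
rewrite (deg_setD1 z (adjME M12)) (deg_setD1 z (_ : adj (E :\ [set d1; d2]) d3 d4)) //.
by apply: adj_setD1 (adjME M34) _; rewrite eq_set2E ?neqF.
Qed.

Let deg_E0 z : z \in [set d1; d2; d3; d4] -> deg E0 z = 2.
Proof.
have [d1S d2S d3S d4S] := d_in_S.
move=> zd; have zS : z \in S by move: zd; rewrite !inE -!orbA => /or4P [] /eqP ->.
have := deg_E_E0 z; rewrite cubE //.
by move: zd; rewrite !inE -!orbA => /or4P [] /eqP ->; rewrite ?neqF ?eqxx /= ?addn0 ?addn1 => -[].
Qed.

Let not_adj_suppressed (F : {set {set V}}) q r w :
  ~~ adj F x q -> q != r -> ~~ adj (suppress F x w r) x q.
Proof.
move=> Fxq qr; rewrite /adj in Fxq *; apply: (notin_suppress w Fxq).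
by apply: contraNneq qr => /set2_inj ->.
Qed.

Lemma diamond_reduced : [/\ is_graph S' E', decomp3 S' E' T' C M'
  & forall z, z \notin [set d1; d2; d3; d4] -> deg E' z = deg E z].
Proof.
have [Ex2 Ex3 Ex4] := not_adj_x_d.
have notE0 q : ~~ adj E x q -> ~~ adj E0 x q.
  by apply: contra; rewrite /adj !inE => /andP [_ /andP [_ ->]].
have gE0 : is_graph S E0 := is_graph_sub (subsetDl _ _) (is_graph_sub (subsetDl _ _) gE).
have D0 : decomp3 S E0 T C M' := decomp3_setD1 (decomp3_setD1 D M12) M34_0.
have [dd1 dd2 dd3 dd4] : [/\ deg E0 d1 = 2, deg E0 d2 = 2, deg E0 d3 = 2 & deg E0 d4 = 2].
  by split; apply: deg_E0; rewrite !inE eqxx ?orbT.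
have [gE1 D1 deg1] := decomp3_suppress gE0 D0 dd1 x_d3 Tx1 T13 (notE0 _ Ex3).
have dE1 : deg E1 d3 = 2 by rewrite deg1 ?neqF.
have T1_32 : adj T1 d3 d2 by repeat apply: adj_suppress_avoid; rewrite ?neqF.
have nE1 : ~~ adj E1 x d2 by apply: not_adj_suppressed (notE0 _ Ex2) d2_d3.
have [gE2 D2 deg2] := decomp3_suppress gE1 D1 dE1 x_d2 (adj_suppress_new _ _ _ _) T1_32 nE1.
have dE2 : deg E2 d2 = 2 by rewrite deg2 ?deg1 ?neqF.
have T2_24 : adj T2 d2 d4 by repeat apply: adj_suppress_avoid; rewrite ?neqF.
have nE2 : ~~ adj E2 x d4 by repeat apply: not_adj_suppressed; rewrite ?neqF //; apply: notE0.
have [gE3 D3 deg3] := decomp3_suppress gE2 D2 dE2 x_d4 (adj_suppress_new _ _ _ _) T2_24 nE2.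
have dE3 : deg E3 d4 = 2 by rewrite deg3 ?deg2 ?deg1 ?neqF.
have T3_4y : adj T3 d4 y by repeat apply: adj_suppress_avoid; rewrite ?neqF.
have nE3 : ~~ adj E3 x y by repeat apply: not_adj_suppressed; rewrite ?neqF //; apply: notE0.
have [gE' D' deg'] := decomp3_suppress gE3 D3 dE3 x_y (adj_suppress_new _ _ _ _) T3_4y nE3.
split=> // z; rewrite !inE => /norP [/norP [/norP [z1 z2] z3] z4].
rewrite deg' // deg3 // deg2 // deg1 // deg_E_E0 !inE.
by rewrite (negbTE z1) (negbTE z2) (negbTE z3) (negbTE z4) !addn0.
Qed.

Lemma diamond_ext_reduced : diamond_ext S' E' T' S E T.
Proof.
have [Ex2 Ex3 Ex4] := not_adj_x_d; have [d1S d2S d3S d4S] := d_in_S.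
have notT p q : ~~ adj E p q -> ([set p; q] \in T) = false.
  by move=> Epq; apply/negbTE; apply: contra Epq; apply: adjTE.
have notTM p q : adj M p q -> ([set p; q] \in T) = false.
  by move=> Mpq; apply/negP => Tpq; apply: adjTM Tpq Mpq.
have facts := (neqF, eq_set2E, eqxx, andbT, andbF, orbT, orbF).
have mem := (notT _ _ Exy, notT _ _ Ex2, notT _ _ Ex3, notT _ _ Ex4, notTM _ _ M12, notTM _ _ M34,
  negbTE Exy, negbTE Ex2 : ([set x; d2] \in E) = false, negbTE Ex3 : ([set x; d3] \in E) = false,
  negbTE Ex4 : ([set x; d4] \in E) = false, d1S, d2S, d3S, d4S,
  Tx1 : [set x; d1] \in T, T13 : [set d1; d3] \in T, T32 : [set d3; d2] \in T,
  T24 : [set d2; d4] \in T, T4y : [set d4; y] \in T,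
  adjTE Tx1 : [set x; d1] \in E, adjTE T13 : [set d1; d3] \in E, adjTE T32 : [set d3; d2] \in E,
  adjTE T24 : [set d2; d4] \in E, adjTE T4y : [set d4; y] \in E,
  adjME M12 : [set d1; d2] \in E, adjME M34 : [set d3; d4] \in E).
exists x, y, d1, d2, d3, d4; repeat split; try by rewrite /= ?inE ?facts ?mem.
all: by finset_by_cases (facts, mem).
Qed.

Lemma diamond_reduction : reducible S E T C.
Proof.
have [gE' D' deg'] := diamond_reduced; have [d1S _ _ _] := d_in_S.
exists S', E', T', M'; split=> //; last by right; apply: diamond_ext_reduced.
- rewrite (cardsD1 d1 S) d1S ltnS; apply/subset_leq_card/subsetP => z.
  by rewrite !inE => /and5P [_ _ _ -> ->].
- move=> z /[!inE] /and5P [z4 z2 z3 z1 zS]; rewrite deg' ?cubE // !inE.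
  by rewrite (negbTE z1) (negbTE z2) (negbTE z3) (negbTE z4).
Qed.
End DiamondReduction.

Lemma T_closed_sub (K : {set V}) p : p \in S -> p \in K ->
  (forall q r, q \in K -> adj T q r -> r \in K) -> {subset S <= K}.
Proof. exact: connected_closed tree_connected. Qed.

Section DiamondCase.
Variables (u v a b x y : V).
Hypotheses (Muv : adj M u v) (Mab : adj M a b)
  (Tua : adj T u a) (Tub : adj T u b) (Tav : adj T a v) (Tvx : adj T v x) (Tby : adj T b y)
  (x_a : x != a) (y_u : y != u)
  (nbr_u : forall z, adj T u z -> z = a \/ z = b) (nbr_a : forall z, adj T a z -> z = u \/ z = v)
  (nbr_v : forall z, adj T v z -> z = a \/ z = x) (nbr_b : forall z, adj T b z -> z = u \/ z = y).

Let Mvu : adj M v u. Proof. by rewrite adj_sym. Qed.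
Let Mba : adj M b a. Proof. by rewrite adj_sym. Qed.
Let Tau : adj T a u. Proof. by rewrite adj_sym. Qed.
Let Tva : adj T v a. Proof. by rewrite adj_sym. Qed.
Let Txv : adj T x v. Proof. by rewrite adj_sym. Qed.
Let Tbu : adj T b u. Proof. by rewrite adj_sym. Qed.
Let u_v : u != v := adjE_neq (adjME Muv).
Let a_b : a != b := adjE_neq (adjME Mab).
Let u_a : u != a := adjE_neq (adjTE Tua).
Let u_b : u != b := adjE_neq (adjTE Tub).
Let a_v : a != v := adjE_neq (adjTE Tav).
Let v_x : v != x := adjE_neq (adjTE Tvx).
Let b_y : b != y := adjE_neq (adjTE Tby).
Let x_u : x != u := adjTM_neq Tvx Mvu.
Let b_v : b != v := adjTM_neq Tub Muv.
Let y_a : y != a := adjTM_neq Tby Mba.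
Let neq0 := (eq_falseLR u_v, eq_falseLR a_b, eq_falseLR u_a, eq_falseLR u_b, eq_falseLR a_v,
  eq_falseLR v_x, eq_falseLR b_y, eq_falseLR x_u, eq_falseLR b_v, eq_falseLR y_a, eq_falseLR x_a,
  eq_falseLR y_u).

Let cycle_vaub : adj T b v -> False.
Proof.
move=> Tbv; apply: (@tree_acyclic [:: v; a; u; b]).
- by rewrite /= !inE ?neq0.
- by [].
- by rewrite /= Tva Tau Tub Tbv.
Qed.

Let x_b : x != b.
Proof. by apply/eqP => xb; apply: cycle_vaub; rewrite adj_sym -xb. Qed.
Let y_v : y != v.
Proof. by apply/eqP => yv; apply: cycle_vaub; rewrite -yv. Qed.
Let x_y : x != y.
Proof.
apply/eqP => xy; apply: (@tree_acyclic [:: x; v; a; u; b]).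
- by rewrite /= !inE ?neq0 ?(eq_falseLR x_b).
- by [].
- by rewrite /= Txv Tva Tau Tub xy Tby.
Qed.

Let neqF := (neq0, eq_falseLR x_b, eq_falseLR y_v, eq_falseLR x_y).
Let Tyb : adj T y b. Proof. by rewrite adj_sym. Qed.

Let not_adj_E_x : [/\ ~~ adj E u x, ~~ adj E a x & ~~ adj E b x].
Proof.
split.
- by apply: (cubic_no_fourth_nbr (adjTE Tua) (adjTE Tub) (adjME Muv)); rewrite /= !inE ?neqF.
- by apply: (cubic_no_fourth_nbr (adjTE Tau) (adjME Mab) (adjTE Tav)); rewrite /= !inE ?neqF.
- by apply: (cubic_no_fourth_nbr (adjTE Tbu) (adjME Mba) (adjTE Tby)); rewrite /= !inE ?neqF.
Qed.

Let not_adj_T_xy : ~~ adj T x y.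
Proof.
apply/negP => Txy; apply: (@tree_acyclic [:: x; v; a; u; b; y]); rewrite /= ?inE ?neqF //.
by rewrite Txv Tva Tau Tub Tby (_ : adj T y x) // adj_sym.
Qed.

(* x and y would be leaves of T, so T would span only the path x v a u b y, leaving no vertex
   for the second cycle edge at x. *)
Let not_adj_C_xy : ~~ adj C x y.
Proof.
apply/negP => Cxy; have [Eux Eax Ebx] := not_adj_E_x.
have leaf_x := cycle_degT1 Cxy.
have leaf_y : deg T y = 1 by apply: (@cycle_degT1 _ x); rewrite adj_sym.
have closedK q r : q \in [set x; v; a; u; b; y] -> adj T q r -> r \in [set x; v; a; u; b; y].
  rewrite !inE => /orP [/orP [/orP [/orP [/orP [] | ] | ] | ] | ] /eqP -> Tqr.
  - by rewrite (deg1_nbr leaf_x Txv Tqr) eqxx ?orbT.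
  - by case: (nbr_v Tqr) => ->; rewrite eqxx ?orbT.
  - by case: (nbr_a Tqr) => ->; rewrite eqxx ?orbT.
  - by case: (nbr_u Tqr) => ->; rewrite eqxx ?orbT.
  - by case: (nbr_b Tqr) => ->; rewrite eqxx ?orbT.
  - by rewrite (deg1_nbr leaf_y Tyb Tqr) eqxx ?orbT.
have gC : is_graph S C := is_graph_sub C_sub_E gE.
have degC_x : deg C x = 2 by case: (degC_0_2 x) => // dx; move: (deg_gt0 Cxy); rewrite dx.
have [z [z_y Cxz _]] := deg2_other_adj gC degC_x Cxy.
have zS : z \in S by apply: adjE_mem (adjCE (_ : adj C z x)); rewrite adj_sym.
have := T_closed_sub (adjE_mem (adjME Muv)) _ closedK zS; rewrite !inE eqxx ?orbT => /(_ isT).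
case/orP => [/orP [/orP [/orP [/orP [] | ] | ] | ] | ] /eqP z_eq; subst z.
- by move: (adjE_neq (adjCE Cxz)); rewrite eqxx.
- exact: adjTC Txv Cxz.
- by move: Eax; rewrite adj_sym (adjCE Cxz).
- by move: Eux; rewrite adj_sym (adjCE Cxz).
- by move: Ebx; rewrite adj_sym (adjCE Cxz).
- by rewrite eqxx in z_y.
Qed.

Let nbrE_v z : adj E v z -> [\/ z = u, z = a | z = x].
Proof.
apply: deg3_nbrs (cubE (adjE_mem (adjME Mvu))) _ _ _ (adjME Mvu) (adjTE Tva) (adjTE Tvx).
all: by rewrite ?neqF.
Qed.

Let nbrE_b z : adj E b z -> [\/ z = u, z = a | z = y].
Proof.
apply: deg3_nbrs (cubE (adjE_mem (adjME Mba))) _ _ _ (adjTE Tbu) (adjME Mba) (adjTE Tby).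
all: by rewrite ?neqF.
Qed.

Let diamond_case_matched : adj M x y -> reducible S E T C.
Proof.
move=> Mxy; have Myx : adj M y x by rewrite adj_sym.
have [x2 [x2_v Txx2 _]] := deg2_other_adj tree_is_graph (matched_degT2 Mxy) Txv.
have [y2 [y2_b Tyy2 _]] := deg2_other_adj tree_is_graph (matched_degT2 Myx) Tyb.
have [Tx2x Ty2y] : adj T x2 x /\ adj T y2 y by rewrite !(adj_sym T _ x) !(adj_sym T _ y).
have [v_x2 b_y2] : v != x2 /\ b != y2 by rewrite !(eq_sym v) !(eq_sym b).
apply: (tutte_reduction Mxy Tvx Txx2 v_x2 Tby Tyy2 b_y2).
- apply/negP => /nbrE_v [] x2_eq; subst x2.
  + by case: (nbr_u Tx2x) => /eqP; rewrite ?neqF.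
  + by case: (nbr_a Tx2x) => /eqP; rewrite ?neqF.
  + by move: (adjE_neq (adjTE Txx2)); rewrite eqxx.
- apply/negP => /nbrE_b [] y2_eq; subst y2.
  + by case: (nbr_u Ty2y) => /eqP; rewrite ?neqF.
  + by case: (nbr_a Ty2y) => /eqP; rewrite ?neqF.
  + by move: (adjE_neq (adjTE Tyy2)); rewrite eqxx.
- apply/eqP => /eq_set2 [[/eqP]|[vy2 _]]; first by rewrite eq_sym ?neqF.
  by subst y2; case: (nbr_v Ty2y) => /eqP; rewrite ?neqF.
Qed.

Lemma diamond_case : reducible S E T C.
Proof.
case: (boolP (adj E x y)) => [/adjE_cases [Txy|Cxy|Mxy]|nExy].
- by move: not_adj_T_xy; rewrite Txy.
- by move: not_adj_C_xy; rewrite Cxy.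
- exact: diamond_case_matched.
- by apply: (diamond_reduction Mvu Mab Txv Tva Tau Tub Tby _ nExy); rewrite /= !inE ?neqF.
Qed.
End DiamondCase.

(* A green ab closes a cycle of T; a cycle edge ab makes a and b leaves of T, cutting u, a, b
   off from v. *)
Lemma triangle_edge_matched u v a b : adj M u v -> adj T u a -> adj T u b -> a != b ->
  adj E a b -> adj M a b.
Proof.
move=> Muv Tua Tub a_b /adjE_cases [Tab|Cab|//]; exfalso.
  apply: (@tree_acyclic [:: u; a; b]) => //=.
    by rewrite !inE negb_or (adjE_neq (adjTE Tua)) (adjE_neq (adjTE Tub)) a_b.
  by rewrite Tua Tab adj_sym Tub.
have nbr_u := deg2_nbrs (matched_degT2 Muv) a_b Tua Tub.
have leaf_a := cycle_degT1 Cab.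
have leaf_b : deg T b = 1 by apply: (@cycle_degT1 _ a); rewrite adj_sym.
have closedK q r : q \in [set u; a; b] -> adj T q r -> r \in [set u; a; b].
  rewrite !inE => /orP [/orP [] | ] /eqP -> Tqr.
  - by case: (nbr_u _ Tqr) => ->; rewrite eqxx ?orbT.
  - by rewrite (deg1_nbr leaf_a (_ : adj T a u) Tqr) ?eqxx // adj_sym.
  - by rewrite (deg1_nbr leaf_b (_ : adj T b u) Tqr) ?eqxx // adj_sym.
have vS : v \in S by apply: adjE_mem (adjME (_ : adj M v u)); rewrite adj_sym.
have := T_closed_sub (adjE_mem (adjME Muv)) _ closedK vS; rewrite !inE eqxx => /(_ isT).
case/orP => [/orP [] | ] /eqP v_eq; subst v.
- by move: (adjE_neq (adjME Muv)); rewrite eqxx.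
- exact: adjTM Tua Muv.
- exact: adjTM Tub Muv.
Qed.

Lemma triangle_case u v a b : adj M u v -> a != b -> adj T u a -> adj T u b -> adj M a b ->
  reducible S E T C.
Proof.
move=> Muv a_b Tua Tub Mab.
have [Mvu Mba] : adj M v u /\ adj M b a by rewrite !(adj_sym M _ u) !(adj_sym M _ a).
have [Tau Tbu] : adj T a u /\ adj T b u by rewrite !(adj_sym T _ u).
have nbr_u := deg2_nbrs (matched_degT2 Muv) a_b Tua Tub.
have [a' [a'_u Taa' nbr_a]] := deg2_other_adj tree_is_graph (matched_degT2 Mab) Tau.
have [b' [b'_u Tbb' nbr_b]] := deg2_other_adj tree_is_graph (matched_degT2 Mba) Tbu.
have other_v c : adj T c v ->
    exists x, [/\ x != c, adj T v x & forall z, adj T v z -> z = c \/ z = x].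
  by move=> Tcv; apply: deg2_other_adj tree_is_graph (matched_degT2 Mvu) _; rewrite adj_sym.
case: (eqVneq a' v) => [a'_v|a'_v].
  subst a'; have [x [x_a Tvx nbr_v]] := other_v _ Taa'.
  exact: (diamond_case Muv Mab Tua Tub Taa' Tvx Tbb' x_a b'_u nbr_u nbr_a nbr_v nbr_b).
case: (eqVneq b' v) => [b'_v|b'_v].
  subst b'; have [x [x_b Tvx nbr_v]] := other_v _ Tbb'.
  have nbr_u' z : adj T u z -> z = b \/ z = a by case/nbr_u; auto.
  exact: (diamond_case Muv Mba Tub Tua Tbb' Tvx Taa' x_b a'_u nbr_u' nbr_b nbr_v nbr_a).
have [u_a u_b] : u != a /\ u != b by split; apply: adjE_neq; apply: adjTE.
have [a_a' b_b'] : a != a' /\ b != b' by split; apply: adjE_neq; apply: adjTE.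
have neqF := (eq_falseLR a_b, eq_falseLR u_a, eq_falseLR u_b, eq_falseLR a_a', eq_falseLR b_b',
  eq_falseLR a'_u, eq_falseLR b'_u, eq_falseLR a'_v, eq_falseLR b'_v,
  eq_falseLR (adjTM_neq Tua Muv), eq_falseLR (adjTM_neq Tub Muv),
  eq_falseLR (adjTM_neq Taa' Mab), eq_falseLR (adjTM_neq Tbb' Mba)).
have a'_b' : a' != b'.
  apply/eqP => a'_b'; apply: (@tree_acyclic [:: u; a; a'; b]); rewrite /= ?inE ?neqF //.
  by rewrite Tua Taa' Tbu a'_b' adj_sym Tbb'.
have no_fourth := cubic_no_fourth_nbr (adjTE Tua) (adjTE Tub) (adjME Muv).
apply: (tutte_reduction Mab Tua Taa' _ Tub Tbb'); rewrite 1?eq_sym //.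
- by apply: no_fourth; rewrite /= !inE ?neqF.
- by apply: no_fourth; rewrite /= !inE ?neqF.
- by apply: contraNneq a'_b' => /set2_inj ->.
Qed.

Lemma matched_reducible u v : adj M u v -> reducible S E T C.
Proof.
move=> Muv; have Mvu : adj M v u by rewrite adj_sym.
have [xu [yu [xu_yu Tuxu Tuyu _]]] := deg2_adj tree_is_graph (matched_degT2 Muv).
have [xv [yv [xv_yv Tvxv Tvyv _]]] := deg2_adj tree_is_graph (matched_degT2 Mvu).
case: (boolP (adj E xu yu)) => [Exyu|nExyu].
  exact: triangle_case Muv xu_yu Tuxu Tuyu (triangle_edge_matched Muv Tuxu Tuyu xu_yu Exyu).
case: (boolP (adj E xv yv)) => [Exyv|nExyv].
  exact: triangle_case Mvu xv_yv Tvxv Tvyv (triangle_edge_matched Mvu Tvxv Tvyv xv_yv Exyv).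
have [Txuu Txvv] : adj T xu u /\ adj T xv v by rewrite !(adj_sym T xu) !(adj_sym T xv).
apply: (tutte_reduction Muv Txuu Tuyu xu_yu Txvv Tvyv xv_yv nExyu nExyv).
have [xu_v yu_v] : xu != v /\ yu != v by split; apply: adjTM_neq Muv.
have neqF := (eq_falseLR xu_yu, eq_falseLR xu_v, eq_falseLR yu_v, eq_falseLR (adjE_neq (adjME Muv)),
  eq_falseLR (adjE_neq (adjTE Tuxu)), eq_falseLR (adjE_neq (adjTE Tuyu))).
have no_square : ~ (adj T v xu /\ adj T v yu).
  move=> [Tvxu Tvyu]; apply: (@tree_acyclic [:: u; xu; v; yu]).
  - by rewrite /= !inE ?neqF.
  - by [].
  - by rewrite /= Tuxu Tvyu !(adj_sym T _ v) Tvxu !(adj_sym T _ u) Tuyu.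
by apply/eqP => /eq_set2 [[xu_xv yu_yv]|[xu_yv yu_xv]]; subst xv yv; apply: no_square.
Qed.

Lemma reducible_of_degT2 p : p \in S -> deg T p = 2 -> reducible S E T C.
Proof.
move=> pS /(degM1_of_degT2 pS) dM.
have [q Mpq] : exists q, adj M p q by apply: deg_gt0_adj (is_graph_sub M_sub_E gE) _; rewrite dM.
exact: matched_reducible Mpq.
Qed.
End Decomposition.

Section Reduction.
Variables (V : finType) (C : {set {set V}}).
Implicit Types (S : {set V}) (E T M : {set {set V}}).

Lemma HIST_matching0 S E T M : is_graph S E -> cubic S E -> decomp3 S E T C M ->
  HIST S E T -> M = set0.
Proof.
move=> gE cubE D [_ noT2]; apply/setP => e; rewrite inE; apply/negP => eM.
have /eqP/cards2P [p [q [_ def_e]]] := proj1 (gE e (subsetP (M_sub_E D) _ eM)).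
have Mpq : adj M p q by rewrite /adj -def_e.
by move: (noT2 p (adjE_mem gE (adjME D Mpq))); rewrite (matched_degT2 gE cubE D Mpq).
Qed.

Lemma HIST_or_degT2 S E T : spanning_tree S E T -> HIST S E T \/ exists2 x, x \in S & deg T x = 2.
Proof.
move=> treeT; case: (pickP [pred x | (x \in S) && (deg T x == 2)]) => [x /andP [xS /eqP]|noT2].
  by right; exists x.
by left; split=> // x xS; move: (noT2 x); rewrite /= xS => /negbT.
Qed.

Lemma reducible_of_not_HIST S E T M : is_graph S E -> cubic S E -> decomp3 S E T C M ->
  ~ HIST S E T -> reducible S E T C.
Proof.
move=> gE cubE D nH; have [treeT _ _ _ _] := D.
case: (HIST_or_degT2 treeT) => [//|[x xS dx]].
exact: (reducible_of_degT2 gE cubE D xS dx).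
Qed.

Lemma reduces_to_HIST n S E T M : #|S| <= n -> is_graph S E -> cubic S E -> decomp3 S E T C M ->
  exists S' E' T' M', [/\ clos_refl_trans _ (red_step C) (S, E, T, M) (S', E', T', M'),
    decomp3 S' E' T' C M' & HIST S' E' T'].
Proof.
elim: n S E T M => [|n IH] S E T M leS gE cubE D; have [treeT _ _ _ _] := D.
all: case: (HIST_or_degT2 treeT) => [HT|[x xS dx]].
all: try by exists S, E, T, M; split=> //; apply: rt_refl.
  by move: leS; rewrite leqn0 => /eqP/cards0_eq S0; rewrite S0 inE in xS.
have [S1 [E1 [T1 [M1 [ltS gE1 cubE1 D1 ext]]]]] := reducible_of_degT2 gE cubE D xS dx.
have [S' [E' [T' [M' [red D' HT']]]]] := IH S1 E1 T1 M1 (leq_trans ltS leS) gE1 cubE1 D1.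
by exists S', E', T', M'; split=> //; apply: rt_trans red; apply: rt_step.
Qed.
End Reduction.

Theorem theorem1 (V : finType) (E T C M : {set {set V}}) :
  is_graph [set: V] E -> cubic [set: V] E -> decomp3 [set: V] E T C M ->
  (HIST [set: V] E T -> M = set0) /\
  (~ HIST [set: V] E T ->
     exists (S' : {set V}) (E' T' M' : {set {set V}}),
       #|S'| < #|[set: V]| /\ is_graph S' E' /\ cubic S' E' /\
       decomp3 S' E' T' C M' /\
       (tutte_ext S' E' T' [set: V] E T \/ diamond_ext S' E' T' [set: V] E T)) /\
  (exists (S' : {set V}) (E' T' M' : {set {set V}}),
     clos_refl_trans _ (red_step C) ([set: V], E, T, M) (S', E', T', M') /\
     decomp3 S' E' T' C M' /\ HIST S' E' T').
Proof.
move=> gE cubE D; split; first exact: HIST_matching0 gE cubE D.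
split.
  move=> nH; have [S' [E' [T' [M' [? ? ? ? ?]]]]] := reducible_of_not_HIST gE cubE D nH.
  by exists S', E', T', M'.
have [S' [E' [T' [M' [? ? ?]]]]] := reduces_to_HIST (leqnn _) gE cubE D.
by exists S', E', T', M'.
Qed.
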